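(* For every partial abstraction $A$ and every expression $e$ (containing no $\&i$ markers, abstraction variables or holes), if $\textsc{LambdaUnify}(A,e)\rightsquigarrow l$ then $l\circ A=e$.
   Context: Expressions: $e ::= \lambda.\,e\mid(e\ e)\mid\$i\mid\&i\mid t$ with de Bruijn indices $\$i$ ($i\in\mathbb{N}$; $\$i$ refers to the $i$-th closest enclosing $\lambda$), overshifted markers $\&i$ ($i\in\mathbb{Z}$) and primitive symbols $t$. Partial abstractions: $A ::= \lambda.\,A\mid(A\ A)\mid\$i\mid t\mid\alpha\mid ??_j$ with abstraction variables $\alpha$ and uniquely indexed holes $??_j$. Downshift: $\downarrow_d(\lambda.b)=\lambda.\downarrow_{d+1}b$; $\downarrow_d(f\ x)=(\downarrow_d f)(\downarrow_d x)$; $\downarrow_d\$i=\$i$ if $i<d$, $\$(i-1)$ if $i>d$, $\&(i-1)$ if $i=d$; $\downarrow_d\&i=\&(i-1)$; $\downarrow_d t=t$. Upshift: $\uparrow_d(\lambda.b)=\lambda.\uparrow_{d+1}b$; $\uparrow_d(f\ x)=(\uparrow_d f)(\uparrow_d x)$; $\uparrow_d\$i=\$i$ if $i<d$, $\$(i+1)$ if $i\ge d$; $\uparrow_d\&i=\&(i+1)$ if $i+1\ne d$, $\$(i+1)$ if $i+1=d$; $\uparrow_d t=t$. A mapping is a finite map from abstraction variables and holes to expressions; $\textsc{DownshiftAll}(l)$ and $\textsc{UpshiftAll}(l)$ apply $\downarrow_0$, resp. $\uparrow_0$, to every bound expression; $\mathrm{merge}(l_1,l_2)$ is the union of $l_1,l_2$,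 undefined if some key is bound to two different expressions. $\textsc{LambdaUnify}$ is the relation given by: $\textsc{LambdaUnify}(\alpha,e)\rightsquigarrow[\alpha\to e]$; $\textsc{LambdaUnify}(??_i,e)\rightsquigarrow[??_i\to e]$; if $\textsc{LambdaUnify}(A_1,e_1)\rightsquigarrow l_1$, $\textsc{LambdaUnify}(A_2,e_2)\rightsquigarrow l_2$ and $l=\mathrm{merge}(l_1,l_2)$ is defined then $\textsc{LambdaUnify}((A_1\ A_2),(e_1\ e_2))\rightsquigarrow l$; if $\textsc{LambdaUnify}(A,e)\rightsquigarrow l'$ then $\textsc{LambdaUnify}(\lambda.A,\lambda.e)\rightsquigarrow\textsc{DownshiftAll}(l')$; and $\textsc{LambdaUnify}(e,e)\rightsquigarrow[\,]$ when $A$ is an expression (no holes or abstraction variables) identical to $e$. Substitution $l\circ A$ (which models beta-reducing $(\lambda\alpha_i.\dots\lambda ??_j.\dots A)$ applied to the bound expressions): $l\circ\lambda.b=\lambda.(\textsc{UpshiftAll}(l)\circ b)$; $l\circ(f\ x)=(l\circ f)(l\circ x)$; $l\circ\$i=\$i$; $l\circ\alpha=l[\alpha]$; $l\circ ??_i=l[??_i]$; $l\circ t=t$. *)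

From Stdlib Require Import ZArith List.
Import ListNotations.
Set Implicit Arguments.

Section Lambda.
Variable T : Type.

(* Expressions e ::= λ.e | (e e) | $i (i : nat) | &i (i : Z) | t *)
Inductive expr : Type :=
| ELam : expr -> expr
| EApp : expr -> expr -> expr
| EVar : nat -> expr
| EMark : Z -> expr
| EPrim : T -> expr.

(* Partial abstractions A ::= λ.A | (A A) | $i | t | α | ??_j *)
Inductive abs : Type :=
| ALam : abs -> abs
| AApp : abs -> abs -> abs
| AVar : nat -> abs
| APrim : T -> abs
| AAbsVar : nat -> abs
| AHole : nat -> abs.

Fixpoint no_marks (e : expr) : Prop :=
  match e with
  | ELam b => no_marks b
  | EApp f x => no_marks f /\ no_marks x
  | EVar _ => True
  | EMark _ => False
  | EPrim _ => True
  end.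

Fixpoint holes (A : abs) : list nat :=
  match A with
  | ALam b => holes b
  | AApp f x => holes f ++ holes x
  | AHole j => [j]
  | _ => []
  end.

Definition holes_unique (A : abs) : Prop := NoDup (holes A).

Fixpoint expr_of_abs (A : abs) : option expr :=
  match A with
  | ALam b => option_map ELam (expr_of_abs b)
  | AApp f x =>
      match expr_of_abs f, expr_of_abs x with
      | Some f', Some x' => Some (EApp f' x')
      | _, _ => None
      end
  | AVar i => Some (EVar i)
  | APrim t => Some (EPrim t)
  | AAbsVar _ => None
  | AHole _ => None
  end.

Fixpoint downshift (d : nat) (e : expr) : expr :=
  match e with
  | ELam b => ELam (downshift (S d) b)
  | EApp f x => EApp (downshift d f) (downshift d x)
  | EVar i =>
      if Nat.ltb i d then EVar i
      else if Nat.ltb d i then EVar (i - 1)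
      else EMark (Z.of_nat i - 1)%Z
  | EMark i => EMark (i - 1)%Z
  | EPrim t => EPrim t
  end.

Fixpoint upshift (d : nat) (e : expr) : expr :=
  match e with
  | ELam b => ELam (upshift (S d) b)
  | EApp f x => EApp (upshift d f) (upshift d x)
  | EVar i => if Nat.ltb i d then EVar i else EVar (S i)
  | EMark i =>
      if Z.eqb (i + 1)%Z (Z.of_nat d) then EVar d else EMark (i + 1)%Z
  | EPrim t => EPrim t
  end.

Inductive key : Type :=
| KVar : nat -> key
| KHole : nat -> key.

Definition mapping := key -> option expr.

Definition empty_map : mapping := fun _ => None.

Definition single (k : key) (e : expr) : mapping :=
  fun k' => if (match k, k' with
                | KVar a, KVar b => Nat.eqb a b
                | KHole a, KHole b => Nat.eqb a b
                | _, _ => false end) then Some e else None.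

Definition DownshiftAll (l : mapping) : mapping :=
  fun k => option_map (downshift 0) (l k).

Definition UpshiftAll (l : mapping) : mapping :=
  fun k => option_map (upshift 0) (l k).

(* merge l1 l2 is defined iff no key is bound to two different expressions *)
Definition merge_defined (l1 l2 : mapping) : Prop :=
  forall k e1 e2, l1 k = Some e1 -> l2 k = Some e2 -> e1 = e2.

Definition merge (l1 l2 : mapping) : mapping :=
  fun k => match l1 k with Some e => Some e | None => l2 k end.

(* The LambdaUnify relation: LambdaUnify A e l  means  LambdaUnify(A,e) ~> l *)
Inductive LambdaUnify : abs -> expr -> mapping -> Prop :=
| LU_var : forall a e, LambdaUnify (AAbsVar a) e (single (KVar a) e)
| LU_hole : forall j e, LambdaUnify (AHole j) e (single (KHole j) e)
| LU_app : forall A1 A2 e1 e2 l1 l2,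
    LambdaUnify A1 e1 l1 -> LambdaUnify A2 e2 l2 ->
    merge_defined l1 l2 ->
    LambdaUnify (AApp A1 A2) (EApp e1 e2) (merge l1 l2)
| LU_lam : forall A e l',
    LambdaUnify A e l' -> LambdaUnify (ALam A) (ELam e) (DownshiftAll l')
| LU_refl : forall A e, expr_of_abs A = Some e -> LambdaUnify A e empty_map.

(* Substitution l ∘ A; None when some variable/hole is unbound in l *)
Fixpoint subst (l : mapping) (A : abs) : option expr :=
  match A with
  | ALam b => option_map ELam (subst (UpshiftAll l) b)
  | AApp f x =>
      match subst l f, subst l x with
      | Some f', Some x' => Some (EApp f' x')
      | _, _ => None
      end
  | AVar i => Some (EVar i)
  | AAbsVar a => l (KVar a)
  | AHole j => l (KHole j)
  | APrim t => Some (EPrim t)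
  end.

End Lambda.

(* The only delicate case is λ:
   unification downshifts the bindings when it leaves a binder, and
   substitution upshifts them when it re-enters it.  Now ↑_d ∘ ↓_d is the
   identity on expressions whose markers &j all satisfy j < d, and at top
   level (d = 0) this holds for every binding produced from a marker-free e,
   because ↓_d turns the variable $d into &(d-1) and lowers every marker.
   Merging only adds bindings, and substitution is monotone in the mapping. *)

From Stdlib Require Import ZArith Lia.

Section Shifts.
Variable T : Type.

Fixpoint marks_lt (d : nat) (e : expr T) : Prop :=
  match e with
  | ELam b => marks_lt (S d) b
  | EApp f x => marks_lt d f /\ marks_lt d x
  | EVar _ _ => True
  | EMark _ j => (j < Z.of_nat d)%Z
  | EPrim _ => True
  end.

Lemma no_marks_marks_lt (e : expr T) : forall d, no_marks e -> marks_lt d e.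
Proof. induction e; simpl; intuition. Qed.

Lemma marks_lt_downshift (e : expr T) : forall d,
  marks_lt d e -> marks_lt d (downshift d e).
Proof.
  induction e as [b IHb | f IHf x IHx | i | j | t]; simpl; intros d H.
  - now apply IHb.
  - destruct H; split; auto.
  - destruct (Nat.ltb_spec i d); simpl; auto.
    destruct (Nat.ltb_spec d i); simpl; auto; lia.
  - lia.
  - exact I.
Qed.

Lemma upshift_downshift (e : expr T) : forall d,
  marks_lt d e -> upshift d (downshift d e) = e.
Proof.
  induction e as [b IHb | f IHf x IHx | i | j | t]; simpl; intros d H.
  - f_equal; auto.
  - destruct H; f_equal; auto.
  - destruct (Nat.ltb_spec i d); simpl.
    + destruct (Nat.ltb_spec i d); [reflexivity | lia].
    + destruct (Nat.ltb_spec d i); simpl.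
      * destruct (Nat.ltb_spec (i - 1) d); [lia | f_equal; lia].
      * replace (Z.of_nat i - 1 + 1)%Z with (Z.of_nat d) by lia.
        rewrite Z.eqb_refl; f_equal; lia.
  - replace (j - 1 + 1)%Z with j by lia.
    destruct (Z.eqb_spec j (Z.of_nat d)); [lia | reflexivity].
  - reflexivity.
Qed.

End Shifts.

Arguments marks_lt {T}.

Section Mappings.
Variable T : Type.

Definition submap (l l' : mapping T) : Prop :=
  forall k v, l k = Some v -> l' k = Some v.

Definition marks_lt_map (d : nat) (l : mapping T) : Prop :=
  forall k v, l k = Some v -> marks_lt d v.

Lemma submap_UpshiftAll (l l' : mapping T) :
  submap l l' -> submap (UpshiftAll l) (UpshiftAll l').
Proof.
  unfold submap, UpshiftAll; intros Hl k v.
  destruct (l k) eqn:E; simpl; [rewrite (Hl _ _ E); auto | discriminate].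
Qed.

Lemma submap_merge_l (l1 l2 : mapping T) : submap l1 (merge l1 l2).
Proof. unfold submap, merge; intros k v ->; reflexivity. Qed.

Lemma submap_merge_r {l1 l2 : mapping T} :
  merge_defined l1 l2 -> submap l2 (merge l1 l2).
Proof.
  unfold submap, merge; intros Hdef k v Hk.
  destruct (l1 k) eqn:E; [rewrite (Hdef _ _ _ E Hk) |]; auto.
Qed.

Lemma submap_UpshiftAll_DownshiftAll {l : mapping T} :
  marks_lt_map 0 l -> submap l (UpshiftAll (DownshiftAll l)).
Proof.
  unfold submap, UpshiftAll, DownshiftAll; intros Hl k v Hk.
  rewrite Hk; simpl; rewrite upshift_downshift; eauto.
Qed.

Lemma subst_submap {A : abs T} {l l' : mapping T} {e : expr T} :
  submap l l' -> subst l A = Some e -> subst l' A = Some e.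
Proof.
  revert l l' e.
  induction A as [b IHb | f IHf x IHx | i | t | a | j]; simpl; intros l l' e Hl H; auto.
  - destruct (subst (UpshiftAll l) b) eqn:E; simpl in H; [| discriminate].
    erewrite IHb; eauto using submap_UpshiftAll.
  - destruct (subst l f) eqn:Ef; [| discriminate].
    destruct (subst l x) eqn:Ex; [| discriminate].
    erewrite IHf, IHx; eauto.
Qed.

Lemma subst_expr_of_abs (A : abs T) : forall (l : mapping T) e,
  expr_of_abs A = Some e -> subst l A = Some e.
Proof.
  induction A as [b IHb | f IHf x IHx | i | t | a | j]; simpl; intros l e H;
    try discriminate; auto.
  - destruct (expr_of_abs b) eqn:E; simpl in H; [| discriminate].
    rewrite (IHb _ _ eq_refl); simpl; congruence.
  - destruct (expr_of_abs f) eqn:Ef; [| discriminate].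
    destruct (expr_of_abs x) eqn:Ex; [| discriminate].
    rewrite (IHf _ _ eq_refl), (IHx _ _ eq_refl); congruence.
Qed.

Lemma LambdaUnify_marks_lt {A : abs T} {e : expr T} {l : mapping T} :
  LambdaUnify A e l -> no_marks e -> marks_lt_map 0 l.
Proof.
  unfold marks_lt_map.
  induction 1 as [a e | j e | A1 A2 e1 e2 l1 l2 _ IH1 _ IH2 _ | A e l' _ IH | A e _];
    simpl; intros Hn k v Hk.
  - unfold single in Hk; destruct k, (Nat.eqb a n); inversion Hk; subst.
    now apply no_marks_marks_lt.
  - unfold single in Hk; destruct k, (Nat.eqb j n); inversion Hk; subst.
    now apply no_marks_marks_lt.
  - destruct Hn as [Hn1 Hn2]; unfold merge in Hk.
    destruct (l1 k) eqn:E; [inversion Hk; subst |]; eauto.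
  - unfold DownshiftAll in Hk; destruct (l' k) eqn:E; inversion Hk; subst.
    apply marks_lt_downshift; eauto.
  - discriminate.
Qed.

Lemma subst_LambdaUnify {A : abs T} {e : expr T} {l : mapping T} :
  LambdaUnify A e l -> no_marks e -> subst l A = Some e.
Proof.
  induction 1 as [a e | j e | A1 A2 e1 e2 l1 l2 _ IH1 _ IH2 Hdef
                 | A e l' HA IH | A e HA]; simpl; intros Hn.
  - unfold single; rewrite Nat.eqb_refl; reflexivity.
  - unfold single; rewrite Nat.eqb_refl; reflexivity.
  - destruct Hn as [Hn1 Hn2].
    rewrite (subst_submap (submap_merge_l l1 l2) (IH1 Hn1)).
    rewrite (subst_submap (submap_merge_r Hdef) (IH2 Hn2)).
    reflexivity.
  - rewrite (subst_submap (submap_UpshiftAll_DownshiftAll (LambdaUnify_marks_lt HA Hn))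
                          (IH Hn)).
    reflexivity.
  - now apply subst_expr_of_abs.
Qed.

End Mappings.

Theorem theoremB9 (T : Type) (A : abs T) (e : expr T) (l : mapping T) :
  holes_unique A -> no_marks e -> LambdaUnify A e l -> subst l A = Some e.
Proof.
  intros _ Hn HA.
  exact (subst_LambdaUnify T HA Hn).
Qed.
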